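(* ${\bf KT^\boxdot}$ is sound and strongly complete with respect to the class of reflexive bimodal frames (both $R_1$ and $R_2$ reflexive), and also with respect to the class of bimodal frames $\langle S,R_1,R_2\rangle$ in which at least one of $R_1,R_2$ is reflexive.
   Context: Fix a nonempty set $\mathbf{P}$ of propositional variables. A bimodal model is $\langle S,R_1,R_2,V\rangle$ with $S$ nonempty, $R_1,R_2\subseteq S\times S$, $V:\mathbf{P}\to\mathcal{P}(S)$. $\mathcal{L}(\boxdot):\ \phi::=p\mid\neg\phi\mid(\phi\wedge\phi)\mid\boxdot\phi$. Truth: $\mathcal{M},s\vDash\boxdot\phi$ iff for all $t,u$ with $sR_1t$ and $sR_2u$, ($\mathcal{M},t\vDash\phi\iff\mathcal{M},u\vDash\phi$); atoms and Booleans as usual. ${\bf K^\boxdot}$ has axioms: all instances of propositional tautologies; $\boxdot\top$; $\boxdot\phi\leftrightarrow\boxdot\neg\phi$; $\boxdot\phi\wedge\boxdot\psi\to\boxdot(\phi\wedge\psi)$; $\boxdot\phi\to\boxdot(\phi\vee\psi)\vee\boxdot(\neg\phi\vee\chi)$; and rules: modus ponens and RE: from $\phi\leftrightarrow\psi$ infer $\boxdot\phi\leftrightarrow\boxdot\psi$. ${\bf KT^\boxdot}$ is ${\bf K^\boxdot}$ plus the axiom schema $\phi\to[\boxdot\phi\to(\boxdot(\phi\to\psi)\to\boxdot\psi)]$. Sound and strongly complete w.r.t. a class $\mathbb{C}$ of frames means: $\Gamma\vdash\phi$ iff $\phi$ is true at every state of every model based on a frame in $\mathbb{C}$ at which all of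 $\Gamma$ is true. *)

From Stdlib Require Import List.
Import ListNotations.

Set Implicit Arguments.

Inductive form (P : Type) : Type :=
| Var : P -> form P
| Neg : form P -> form P
| And : form P -> form P -> form P
| Dot : form P -> form P.

Arguments Var {P} _.
Arguments Neg {P} _.
Arguments And {P} _ _.
Arguments Dot {P} _.

Definition Or {P} (a b : form P) : form P := Neg (And (Neg a) (Neg b)).
Definition Imp {P} (a b : form P) : form P := Neg (And a (Neg b)).
Definition Iff {P} (a b : form P) : form P := And (Imp a b) (Imp b a).
(* T is the abbreviation  ~(p0 /\ ~p0)  for a fixed variable p0 (P nonempty). *)
Definition Top {P} (p0 : P) : form P := Neg (And (Var p0) (Neg (Var p0))).

(* Propositional tautologies: boxdot-formulas are treated as atoms. *)
Fixpoint beval {P} (f : P -> bool) (g : form P -> bool) (phi : form P) : bool :=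
  match phi with
  | Var p => f p
  | Neg a => negb (beval f g a)
  | And a b => andb (beval f g a) (beval f g b)
  | Dot a => g (Dot a)
  end.

Definition tautology {P} (phi : form P) : Prop :=
  forall f g, beval f g phi = true.

Inductive KTthm {P} (p0 : P) : form P -> Prop :=
| ax_taut phi : tautology phi -> KTthm p0 phi
| ax_top : KTthm p0 (Dot (Top p0))
| ax_neg phi : KTthm p0 (Iff (Dot phi) (Dot (Neg phi)))
| ax_and phi psi : KTthm p0 (Imp (And (Dot phi) (Dot psi)) (Dot (And phi psi)))
| ax_or phi psi chi :
    KTthm p0 (Imp (Dot phi) (Or (Dot (Or phi psi)) (Dot (Or (Neg phi) chi))))
| ax_T phi psi :
    KTthm p0 (Imp phi (Imp (Dot phi) (Imp (Dot (Imp phi psi)) (Dot psi))))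
| rule_mp phi psi : KTthm p0 (Imp phi psi) -> KTthm p0 phi -> KTthm p0 psi
| rule_RE phi psi : KTthm p0 (Iff phi psi) -> KTthm p0 (Iff (Dot phi) (Dot psi)).

Fixpoint conj {P} (p0 : P) (l : list (form P)) : form P :=
  match l with
  | [] => Top p0
  | a :: l' => And a (conj p0 l')
  end.

Definition KTderives {P} (p0 : P) (Gamma : form P -> Prop) (phi : form P) : Prop :=
  exists l : list (form P),
    (forall g, In g l -> Gamma g) /\ KTthm p0 (Imp (conj p0 l) phi).

Fixpoint sat {P} {S : Type} (R1 R2 : S -> S -> Prop) (V : P -> S -> Prop)
  (s : S) (phi : form P) : Prop :=
  match phi with
  | Var p => V p s
  | Neg a => ~ sat R1 R2 V s a
  | And a b => sat R1 R2 V s a /\ sat R1 R2 V s b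
  | Dot a => forall t u, R1 s t -> R2 s u ->
               (sat R1 R2 V t a <-> sat R1 R2 V u a)
  end.

Definition frame_class : Type :=
  forall S : Type, (S -> S -> Prop) -> (S -> S -> Prop) -> Prop.

Definition sem_conseq {P} (C : frame_class) (Gamma : form P -> Prop) (phi : form P) : Prop :=
  forall (S : Type) (R1 R2 : S -> S -> Prop) (V : P -> S -> Prop) (s : S),
    C S R1 R2 ->
    (forall g, Gamma g -> sat R1 R2 V s g) ->
    sat R1 R2 V s phi.

Definition sound_strongly_complete {P} (p0 : P) (C : frame_class) : Prop :=
  forall (Gamma : form P -> Prop) (phi : form P),
    KTderives p0 Gamma phi <-> sem_conseq C Gamma phi.

Definition reflexive {S : Type} (R : S -> S -> Prop) : Prop := forall s, R s s.

Definition both_reflexive : frame_class :=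
  fun S R1 R2 => reflexive R1 /\ reflexive R2.

Definition one_reflexive : frame_class :=
  fun S R1 R2 => reflexive R1 \/ reflexive R2.

From Stdlib Require Import List Classical ClassicalEpsilon.
From mathcomp Require classical_sets.
Import ListNotations.

(* Soundness is proved for the larger class of frames in which AT LEAST ONE
   of R1, R2 is reflexive; completeness for the smaller class in which BOTH
   are reflexive.  Since the second class is contained in the first, both
   classes then characterize the same consequence relation (lemma
   [sandwich]), which is the main theorem.

   Completeness is the usual canonical-model argument.  Derivability from
   premises is handled through a small Hilbert-style toolkit (modus ponens,
   deduction theorem), maximal consistent sets are obtained by Zorn's lemma,
   and the canonical model has as its states the maximal consistent sets,
   with R1 = R2 = "t contains every phi such that phi /\ [.]phi is in s".
   This relation is reflexive, and the truth lemma for [.]phi rests on two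
   facts: successors of s agree with s on phi when [.]phi is in s (axiom
   [.]phi <-> [.]~phi), and otherwise some successor disagrees with s on phi
   (the T-axiom together with the derived necessitation rule). *)

(* Propositional tautologies: case analysis on the boolean values of the
   maximal non-Boolean subformulas. *)
Ltac taut :=
  intros ff gg; unfold Imp, Iff, Or, Top in *; simpl;
  repeat match goal with
         | |- context [beval ff gg ?x] =>
             let e := fresh in destruct (beval ff gg x) eqn:e
         | |- context [ff ?x] => destruct (ff x)
         | |- context [gg ?x] => destruct (gg x)
         end; try reflexivity; simpl in *; try discriminate.

Lemma both_reflexive_one_reflexive (S : Type) (R1 R2 : S -> S -> Prop) :
  both_reflexive R1 R2 -> one_reflexive R1 R2.
Proof. intros [H _]. left; exact H. Qed.

Lemma sem_conseq_antitone {P} {C1 C2 : frame_class} {Gamma : form P -> Prop} {phi} :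
  (forall S R1 R2, C1 S R1 R2 -> C2 S R1 R2) ->
  sem_conseq C2 Gamma phi -> sem_conseq C1 Gamma phi.
Proof. intros Sub H S R1 R2 V s HC. apply H, Sub, HC. Qed.

Lemma sandwich {P} (p0 : P) (C1 C2 : frame_class) :
  (forall S R1 R2, C1 S R1 R2 -> C2 S R1 R2) ->
  (forall Gamma phi, KTderives p0 Gamma phi -> sem_conseq C2 Gamma phi) ->
  (forall Gamma phi, sem_conseq C1 Gamma phi -> KTderives p0 Gamma phi) ->
  sound_strongly_complete p0 C1 /\ sound_strongly_complete p0 C2.
Proof.
  intros Sub Sound Compl. split; intros Gamma phi; split; auto.
  - intros H. exact (sem_conseq_antitone Sub (Sound _ _ H)).
  - intros H. apply Compl, (sem_conseq_antitone Sub H).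
Qed.

Section Soundness.
Context {P : Type} {S : Type} (R1 R2 : S -> S -> Prop) (V : P -> S -> Prop).
Notation sat := (sat R1 R2 V).

Lemma sat_Imp s a b : sat s (Imp a b) <-> (sat s a -> sat s b).
Proof. unfold Imp; simpl. split; intros; [apply NNPP|]; tauto. Qed.

Lemma sat_Iff s a b : sat s (Iff a b) <-> (sat s a <-> sat s b).
Proof.
  change (sat s (Imp a b) /\ sat s (Imp b a) <-> (sat s a <-> sat s b)).
  rewrite !sat_Imp. tauto.
Qed.

Lemma sat_Or s a b : sat s (Or a b) <-> (sat s a \/ sat s b).
Proof. unfold Or; simpl. split; intros; [apply NNPP|]; tauto. Qed.

Lemma sat_conj (p0 : P) s l : (forall g, In g l -> sat s g) -> sat s (conj p0 l).
Proof.
  induction l as [|a l IH]; intros H; simpl.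
  - tauto.
  - split; [apply H | apply IH; intros; apply H]; simpl; auto.
Qed.

Definition bdec (A : Prop) : bool :=
  if excluded_middle_informative A then true else false.

Lemma bdec_true (A : Prop) : bdec A = true <-> A.
Proof.
  unfold bdec. destruct (excluded_middle_informative A); split; auto; discriminate.
Qed.

Lemma beval_sat s phi :
  beval (fun p => bdec (V p s)) (fun q => bdec (sat s q)) phi = true <-> sat s phi.
Proof.
  induction phi as [p|a IH|a IHa b IHb|a IH]; simpl.
  - apply bdec_true.
  - rewrite <- IH. destruct (beval _ _ a); simpl; intuition congruence.
  - rewrite <- IHa, <- IHb.
    destruct (beval _ _ a), (beval _ _ b); simpl; intuition congruence.
  - apply (bdec_true (sat s (Dot a))).
Qed.

Lemma tautology_valid phi : tautology phi -> forall s, sat s phi.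
Proof. intros H s. apply beval_sat, H. Qed.

Lemma dot_uniform s a t0 u0 x :
  sat s (Dot a) -> R1 s t0 -> R2 s u0 -> R1 s x \/ R2 s x ->
  (sat x a <-> sat u0 a).
Proof.
  simpl. intros H Ht0 Hu0 [Hx|Hx].
  - exact (H x u0 Hx Hu0).
  - rewrite <- (H t0 x Ht0 Hx). exact (H t0 u0 Ht0 Hu0).
Qed.

(* With one relation reflexive, s itself is a successor, so a and [.]a at
   s force a at every pair of successors. *)
Lemma dot_reflexive_spread s a t u :
  one_reflexive R1 R2 -> sat s a -> sat s (Dot a) -> R1 s t -> R2 s u ->
  sat t a /\ sat u a.
Proof.
  simpl. intros [Rf|Rf] Ha Hd Ht Hu.
  - assert (sat u a) by (apply (Hd s u (Rf s) Hu), Ha).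
    split; [apply (Hd t u Ht Hu)|]; assumption.
  - assert (sat t a) by (apply (Hd t s Ht (Rf s)), Ha).
    split; [|apply (Hd t u Ht Hu)]; assumption.
Qed.

(* Validity of the axiom  [.]a -> [.](a \/ b) \/ [.](~a \/ c): the common
   truth value of a on the successors decides which disjunct holds. *)
Lemma ax_or_valid s a b c : sat s (Imp (Dot a) (Or (Dot (Or a b)) (Dot (Or (Neg a) c)))).
Proof.
  apply sat_Imp. intros H. apply sat_Or.
  destruct (classic (exists t0 u0, R1 s t0 /\ R2 s u0)) as [[t0 [u0 [Ht0 Hu0]]]|N];
    [| left; simpl; intros t u Ht Hu; exfalso; eauto].
  pose proof (fun x => dot_uniform s a t0 u0 x H Ht0 Hu0) as Unif.
  destruct (classic (sat u0 a)) as [Y|Nu];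
    [left | right]; intros t u Ht Hu; rewrite !sat_Or; simpl;
    rewrite (Unif t (or_introl Ht)), (Unif u (or_intror Hu)); tauto.
Qed.

Lemma ax_T_valid s a b :
  one_reflexive R1 R2 -> sat s (Imp a (Imp (Dot a) (Imp (Dot (Imp a b)) (Dot b)))).
Proof.
  intros Hrefl. rewrite !sat_Imp. intros Ha Hd Hi t u Ht Hu.
  destruct (dot_reflexive_spread s a t u Hrefl Ha Hd Ht Hu) as [At Au].
  specialize (Hi t u Ht Hu). rewrite !sat_Imp in Hi. tauto.
Qed.

Lemma RE_valid a b :
  (forall s, sat s (Iff a b)) -> forall s, sat s (Iff (Dot a) (Dot b)).
Proof.
  intros H s. apply sat_Iff. simpl.
  assert (E : forall x, sat x a <-> sat x b) by (intros x; apply sat_Iff, H).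
  split; intros K t u Ht Hu; specialize (K t u Ht Hu);
    rewrite ?(E t), ?(E u) in *; rewrite <- ?(E t), <- ?(E u) in *; exact K.
Qed.

Lemma KTthm_valid (p0 : P) phi :
  one_reflexive R1 R2 -> KTthm p0 phi -> forall s, sat s phi.
Proof.
  intros Hrefl. induction 1 as [phi Ht| |a|a b|a b c|a b|a b _ IHab _ IHa|a b _ IH];
    intros s.
  - exact (tautology_valid phi Ht s).
  - simpl. tauto.
  - apply sat_Iff. simpl. split; intros H t u Ht Hu; specialize (H t u Ht Hu); tauto.
  - apply sat_Imp. simpl. intros [H1 H2] t u Ht Hu.
    specialize (H1 t u Ht Hu); specialize (H2 t u Ht Hu); tauto.
  - apply ax_or_valid.
  - exact (ax_T_valid s a b Hrefl).
  - apply (proj1 (sat_Imp s a b) (IHab s)), IHa.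
  - exact (RE_valid a b IH s).
Qed.
End Soundness.

Theorem soundness {P} (p0 : P) (Gamma : form P -> Prop) phi :
  KTderives p0 Gamma phi -> sem_conseq one_reflexive Gamma phi.
Proof.
  intros [l [Hl Ht]] S R1 R2 V s Hrefl HG.
  pose proof (KTthm_valid R1 R2 V p0 _ Hrefl Ht s) as H.
  rewrite sat_Imp in H. apply H, sat_conj. intros g Hg. apply HG, Hl, Hg.
Qed.

Section Derivability.
Context {P : Type} (p0 : P).
Notation F := (form P).
Notation thm := (KTthm p0).
Notation derives := (KTderives p0).

Definition Bot : F := Neg (Top p0).
Definition add (X : F -> Prop) (a : F) : F -> Prop := fun x => X x \/ x = a.

Lemma thm_taut_mp a b : tautology (Imp a b) -> thm a -> thm b.
Proof. intros T H. exact (rule_mp (ax_taut p0 T) H). Qed.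

Lemma conj_app l1 l2 : thm (Imp (conj p0 (l1 ++ l2)) (And (conj p0 l1) (conj p0 l2))).
Proof.
  induction l1 as [|a l1 IH]; simpl.
  - apply ax_taut. taut.
  - eapply thm_taut_mp; [|exact IH]. taut.
Qed.

Lemma derives_mono (X Y : F -> Prop) a :
  (forall x, X x -> Y x) -> derives X a -> derives Y a.
Proof. intros Sub [l [Hl Ht]]. exists l. auto. Qed.

Lemma derives_thm X a : thm a -> derives X a.
Proof.
  intros H. exists []. split; [simpl; tauto|].
  eapply thm_taut_mp; [|exact H]. taut.
Qed.

Lemma derives_assum (X : F -> Prop) a : X a -> derives X a.
Proof.
  intros H. exists [a]. split; [intros g [E|[]]; subst; exact H|].
  apply ax_taut. simpl. taut.
Qed.

Lemma derives_mp X a b : derives X (Imp a b) -> derives X a -> derives X b.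
Proof.
  intros [l1 [Hl1 H1]] [l2 [Hl2 H2]]. exists (l1 ++ l2). split.
  - intros g Hg. apply in_app_or in Hg. destruct Hg; auto.
  - refine (rule_mp (rule_mp (rule_mp (ax_taut p0 _) (conj_app l1 l2)) H1) H2). taut.
Qed.

Lemma derives_taut1 X a b : tautology (Imp a b) -> derives X a -> derives X b.
Proof. intros T. apply derives_mp, derives_thm, ax_taut, T. Qed.

Lemma derives_taut2 X a b c :
  tautology (Imp a (Imp b c)) -> derives X a -> derives X b -> derives X c.
Proof.
  intros T Ha. apply derives_mp. eapply derives_mp; [|exact Ha].
  apply derives_thm, ax_taut, T.
Qed.

Lemma split_premises (X : F -> Prop) psi l :
  (forall g, In g l -> add X psi g) ->
  exists l', (forall g, In g l' -> X g) /\ thm (Imp (And psi (conj p0 l')) (conj p0 l)).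
Proof.
  induction l as [|a l IH]; intros Hl.
  - exists []. split; [simpl; tauto|]. apply ax_taut. simpl. taut.
  - destruct IH as [l' [H1 H2]]; [intros g Hg; apply Hl; simpl; auto|].
    destruct (Hl a (or_introl eq_refl)) as [Xa|Ea]; [|subst a].
    + exists (a :: l'). split; [intros g [Eg|Hg]; [subst g|]; auto|].
      simpl. eapply thm_taut_mp; [|exact H2]. taut.
    + exists l'. split; auto. simpl. eapply thm_taut_mp; [|exact H2]. taut.
Qed.

Lemma deduction X psi chi : derives (add X psi) chi -> derives X (Imp psi chi).
Proof.
  intros [l [Hl Ht]]. destruct (split_premises X psi l Hl) as [l' [H1 H2]].
  exists l'. split; auto.
  refine (rule_mp (rule_mp (ax_taut p0 _) H2) Ht). taut.
Qed.

Definition consistent (X : F -> Prop) : Prop := ~ derives X Bot.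

Definition MCS (M : F -> Prop) : Prop :=
  consistent M /\ forall a, consistent (add M a) -> M a.

Section MCSProperties.
Variable M : F -> Prop.
Hypothesis HM : MCS M.

Lemma mcs_closed a : derives M a -> M a.
Proof.
  intros Ha. apply (proj2 HM). intros Inc. apply (proj1 HM).
  apply deduction in Inc. eapply derives_taut2; [|exact Ha|exact Inc]. taut.
Qed.

Lemma mcs_thm a : thm a -> M a.
Proof. intros H. apply mcs_closed, derives_thm, H. Qed.

Lemma mcs_taut1 a b : tautology (Imp a b) -> M a -> M b.
Proof.
  intros T Ha. apply mcs_closed. eapply derives_taut1; [exact T|]. apply derives_assum, Ha.
Qed.

Lemma mcs_taut2 a b c : tautology (Imp a (Imp b c)) -> M a -> M b -> M c.
Proof.
  intros T Ha Hb. apply mcs_closed.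
  eapply derives_taut2; [exact T| |]; apply derives_assum; assumption.
Qed.

Lemma mcs_neg a : M (Neg a) <-> ~ M a.
Proof.
  split.
  - intros Hn Ha. apply (proj1 HM).
    eapply derives_taut2; [| apply derives_assum, Ha | apply derives_assum, Hn]. taut.
  - intros Na. apply (proj2 HM). intros Inc. apply Na, mcs_closed.
    apply deduction in Inc. eapply derives_taut1; [|exact Inc]. taut.
Qed.

Lemma mcs_and a b : M (And a b) <-> M a /\ M b.
Proof.
  split.
  - intros H. split; eapply mcs_taut1; try exact H; taut.
  - intros [Ha Hb]. eapply mcs_taut2; [| exact Ha | exact Hb]. taut.
Qed.

Lemma mcs_dot_neg a : M (Dot a) <-> M (Dot (Neg a)).
Proof.
  pose proof (mcs_thm _ (ax_neg p0 a)) as E.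
  split; intros H; (eapply mcs_taut2; [| exact E | exact H]); taut.
Qed.
End MCSProperties.

Lemma list_in_chain (X : F -> Prop) (Ch : (F -> Prop) -> Prop) l :
  classical_sets.total_on Ch classical_sets.subset ->
  (forall g, In g l -> X g \/ exists Y, Ch Y /\ Y g) ->
  (forall g, In g l -> X g) \/ exists Y, Ch Y /\ forall g, In g l -> X g \/ Y g.
Proof.
  intros Tot. induction l as [|a l IH]; intros H; [left; simpl; tauto|].
  destruct (H a (or_introl eq_refl)) as [Xa|[Z [ChZ Za]]].
  - destruct IH as [IH|[Y [ChY HY]]]; [intros g Hg; apply H; simpl; auto| |].
    + left. intros g [Eg|Hg]; [subst g|]; auto.
    + right. exists Y. split; auto. intros g [Eg|Hg]; [subst g|]; auto.
  - destruct IH as [IH|[Y [ChY HY]]]; [intros g Hg; apply H; simpl; auto| |].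
    + right. exists Z. split; auto. intros g [Eg|Hg]; [subst g|]; auto.
    + destruct (Tot Y Z ChY ChZ) as [YZ|ZY].
      * right. exists Z. split; auto.
        intros g [Eg|Hg]; [subst g; auto|]. destruct (HY g Hg); auto.
      * right. exists Y. split; auto. intros g [Eg|Hg]; [subst g|]; auto.
Qed.

(* Lindenbaum's lemma, by Zorn's lemma applied to the sets Y such that
   X + Y is consistent: the union of a chain of them is again one, since a
   derivation uses only finitely many premises. *)
Lemma lindenbaum (X : F -> Prop) :
  consistent X -> exists M, MCS M /\ forall x, X x -> M x.
Proof.
  intros CX.
  destruct (@classical_sets.Zorn_bigcup F
              (fun Y : F -> Prop => consistent (fun x => X x \/ Y x)))
    as [A [CA MaxA]].
  - intros Ch Sub Tot [l [H1 H2]].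
    destruct (list_in_chain X Ch l Tot) as [H|[Y [ChY HY]]].
    + intros g Hg. destruct (H1 g Hg) as [Xg|[Y ChY Yg]]; eauto.
    + apply CX. exists l; auto.
    + apply (Sub Y ChY). exists l; auto.
  - exists (fun x => X x \/ A x). split; [split|]; auto.
    intros a C. apply NNPP. intros Na.
    apply (MaxA (add A a)).
    + split; [intros x Ax; left; exact Ax|].
      intros Sub. apply Na. right. exact (Sub a (or_intror eq_refl)).
    + intros D. apply C. eapply derives_mono; [|exact D].
      intros x [Xx|[Ax|Ex]]; unfold add; auto.
Qed.
End Derivability.

Section CanonicalModel.
Context {P : Type} (p0 : P).
Notation F := (form P).
Notation thm := (KTthm p0).
Notation derives := (KTderives p0).

(* Necessitation is derivable: a theorem is equivalent to T, and [.]T is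
   an axiom. *)
Lemma necessitation a : thm a -> thm (Dot a).
Proof.
  intros H. assert (E : thm (Iff a (Top p0))) by (eapply thm_taut_mp; [|exact H]; taut).
  refine (rule_mp (rule_mp (ax_taut p0 _) (rule_RE E)) (ax_top p0)). taut.
Qed.

(* The formulas that are both true and "determined" at M; a canonical
   successor of M is a maximal consistent set containing all of them. *)
Definition core (M : F -> Prop) : F -> Prop := fun x => M (And x (Dot x)).

Section Core.
Variable M : F -> Prop.
Hypothesis HM : MCS p0 M.
Local Notation M_and := (mcs_and p0 M HM).
Local Notation M_thm := (mcs_thm p0 M HM _).
Local Notation M_taut2 := (mcs_taut2 p0 M HM).

(* The core is closed under finite conjunctions
   (axiom [.]a /\ [.]b -> [.](a /\ b)). *)
Lemma core_conj l : (forall g, In g l -> core M g) -> core M (conj p0 l).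
Proof.
  unfold core. induction l as [|a l IH]; intros H; simpl; apply M_and.
  - split; [apply M_thm, ax_taut; taut | apply M_thm, ax_top].
  - destruct (proj1 (M_and _ _) (H a (or_introl eq_refl))) as [Ma MDa].
    destruct (proj1 (M_and _ _) (IH (fun g Hg => H g (or_intror Hg))))
      as [Ml MDl].
    split; [apply M_and; auto|].
    eapply M_taut2; [| exact (M_thm (ax_and p0 a (conj p0 l)))
                     | apply M_and; split; [exact MDa | exact MDl]].
    taut.
Qed.

(* Whatever the core derives is determined at M: this is where the T-axiom
   and necessitation enter. *)
Lemma core_derives_dot b : derives (core M) b -> M (Dot b).
Proof.
  intros [l [Hl Ht]].
  destruct (proj1 (M_and _ _) (core_conj l Hl)) as [Mc MDc].
  pose proof (M_thm (necessitation _ Ht)) as MDi.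
  pose proof (M_thm (ax_T p0 (conj p0 l) b)) as AxT.
  eapply M_taut2; [| apply M_and; split; [exact Mc | exact MDc]
                   | apply M_and; split; [exact MDi | exact AxT]].
  taut.
Qed.

Lemma refuting_successor b :
  ~ M (Dot b) -> exists N, MCS p0 N /\ (forall x, core M x -> N x) /\ N (Neg b).
Proof.
  intros ND. destruct (lindenbaum p0 (add (core M) (Neg b))) as [N [HN Sub]].
  - intros Inc. apply ND, core_derives_dot.
    apply deduction in Inc. eapply derives_taut1; [|exact Inc]. taut.
  - exists N. split; [exact HN|]. unfold add in Sub. auto.
Qed.
End Core.

Definition CS : Type := {M : F -> Prop | MCS p0 M}.
Definition CR (s t : CS) : Prop := forall x, core (proj1_sig s) x -> proj1_sig t x.
Definition CV (p : P) (s : CS) : Prop := proj1_sig s (Var p).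

(* The canonical relation is reflexive, since phi /\ [.]phi implies phi. *)
Lemma CR_refl : reflexive CR.
Proof.
  intros [M HM] x Hx. simpl in *. exact (proj1 (proj1 (mcs_and p0 M HM _ _) Hx)).
Qed.

Lemma successor_agrees (s t : CS) a :
  proj1_sig s (Dot a) -> CR s t -> (proj1_sig t a <-> proj1_sig s a).
Proof.
  destruct s as [M HM], t as [N HN]. unfold CR, core. simpl. intros MDa Ht.
  destruct (classic (M a)) as [Ma|Na].
  - assert (N a) by (apply Ht, (mcs_and p0 M HM); split; assumption). tauto.
  - assert (N (Neg a)).
    { apply Ht, (mcs_and p0 M HM).
      split; [apply (mcs_neg p0 M HM), Na | exact (proj1 (mcs_dot_neg p0 M HM a) MDa)]. }
    apply (mcs_neg p0 N HN) in H. tauto.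
Qed.

Lemma successor_disagrees (s : CS) a :
  ~ proj1_sig s (Dot a) -> exists t, CR s t /\ ~ (proj1_sig t a <-> proj1_sig s a).
Proof.
  destruct s as [M HM]. simpl. intros ND.
  destruct (classic (M a)) as [Ma|Na].
  - destruct (refuting_successor M HM a ND) as [N [HN [Sub Nna]]].
    exists (exist _ N HN). split; [exact Sub|]. simpl.
    apply (mcs_neg p0 N HN) in Nna. tauto.
  - assert (ND' : ~ M (Dot (Neg a))) by (rewrite <- (mcs_dot_neg p0 M HM); exact ND).
    destruct (refuting_successor M HM (Neg a) ND') as [N [HN [Sub Nnna]]].
    exists (exist _ N HN). split; [exact Sub|]. simpl.
    rewrite (mcs_neg p0 N HN), (mcs_neg p0 N HN) in Nnna. tauto.
Qed.

Lemma truth_lemma phi : forall s : CS, sat CR CR CV s phi <-> proj1_sig s phi.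
Proof.
  induction phi as [p|a IH|a IHa b IHb|a IH]; intros s; simpl.
  - reflexivity.
  - rewrite IH. symmetry. apply (mcs_neg p0), proj2_sig.
  - rewrite IHa, IHb. symmetry. apply (mcs_and p0), proj2_sig.
  - setoid_rewrite IH. split.
    + intros H. apply NNPP. intros ND.
      destruct (successor_disagrees s a ND) as [t [Ht Dis]].
      exact (Dis (iff_sym (H s t (CR_refl s) Ht))).
    + intros HD t u Ht Hu.
      rewrite (successor_agrees s t a HD Ht), (successor_agrees s u a HD Hu).
      reflexivity.
Qed.

(* Strong completeness for frames with both relations reflexive: a set
   Gamma + ~phi that is consistent extends to a canonical state refuting
   phi while satisfying Gamma. *)
Theorem completeness (Gamma : F -> Prop) phi :
  sem_conseq both_reflexive Gamma phi -> derives Gamma phi.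
Proof.
  intros Hsem. apply NNPP. intros ND.
  destruct (lindenbaum p0 (add Gamma (Neg phi))) as [M [HM Sub]].
  - intros Inc. apply ND. apply deduction in Inc.
    eapply derives_taut1; [|exact Inc]. taut.
  - unfold add in Sub.
    assert (Hphi : sat CR CR CV (exist _ M HM) phi).
    { apply Hsem; [split; exact CR_refl|].
      intros g Hg. apply truth_lemma. simpl. auto. }
    apply truth_lemma in Hphi. simpl in Hphi.
    apply (mcs_neg p0 M HM phi); auto.
Qed.
End CanonicalModel.

Theorem mainTheorem12 (P : Type) (p0 : P) :
  sound_strongly_complete p0 both_reflexive /\
  sound_strongly_complete p0 one_reflexive.
Proof.
  apply sandwich.
  - exact both_reflexive_one_reflexive.
  - apply soundness.
  - apply completeness.
Qed.
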